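(* Let $k\geq3$, $A=\{0,1,\dots,k-1\}$, $N=k-1$ and let $T\colon A^{N^2}\to A$ be given by $T(x_{1,1},\dots,x_{1,N},\dots,x_{N,1},\dots,x_{N,N})=1$ if $x_{i,j}=i$ for all $i,j\in\{1,\dots,N\}$ or $x_{i,j}=j$ for all $i,j\in\{1,\dots,N\}$, and $0$ otherwise. Then for all $1\leq n<k-1$, \[\langle\{T\}\rangle^{(n)}=J_n(A)\cup\{c^n_0\},\] where $c^n_0$ is the $n$-ary constant zero function.
   Context: $\langle\{T\}\rangle$ denotes the clone generated by $T$ (all term operations of positive arity of the algebra $(A;T)$, including projections), and $\langle\{T\}\rangle^{(n)}$ its $n$-ary members. $J_n(A)$ is the set of $n$-ary projections $(x_1,\dots,x_n)\mapsto x_i$, $1\leq i\leq n$. *)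

From mathcomp Require Import all_boot.
Set Implicit Arguments. Unset Strict Implicit. Unset Printing Implicit Defensive.

(* in_clone T n f : f is an n-ary member of the clone <{T}> generated by the
   single operation T : (I -> A) -> A (arity #|I|), i.e. f is an n-ary term
   operation of the algebra (A; T): the smallest set of n-ary operations
   containing the projections and closed under composition with T. *)
Inductive in_clone (A : Type) (I : finType) (T : (I -> A) -> A) (n : nat)
  : (('I_n -> A) -> A) -> Prop :=
| clone_proj (i : 'I_n) : in_clone T (fun x => x i)
| clone_comp (g : I -> (('I_n -> A) -> A)) :
    (forall j, in_clone T (g j)) ->
    in_clone T (fun x => T (fun j => g j x)).

Definition is_projection (A : Type) (n : nat) (f : ('I_n -> A) -> A) : Prop :=
  exists i : 'I_n, f = (fun x => x i).

(* Carrier A = {0,1,...,k-1}, realised as 'I_(k.-1).+1 (which has k elements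
   when k >= 1); N = k - 1. *)
Definition carrier (k : nat) : finType := 'I_k.-1.+1.

(* The operation T : A^(N^2) -> A; variables x_{i,j}, i,j in {1..N}, are
   indexed by pairs (i', j') in 'I_N * 'I_N with i = i'+1, j = j'+1. *)
Definition Top (k : nat) (x : 'I_k.-1 * 'I_k.-1 -> carrier k) : carrier k :=
  if [forall ij, val (x ij) == ij.1.+1] || [forall ij, val (x ij) == ij.2.+1]
  then inord 1 else ord0.

Definition const0 (k n : nat) : ('I_n -> carrier k) -> carrier k :=
  fun _ => ord0.

From mathcomp Require Import all_boot.
From mathcomp Require Import zify.
From Stdlib Require Import FunctionalExtensionality.

Set Implicit Arguments.
Unset Strict Implicit.
Unset Printing Implicit Defensive.

(* If [Top x] is nonzero then on the diagonal x_{i,i} = i, so [x] takes the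
   N distinct nonzero values 1, ..., N.  The argument of [Top] in a
   composition of projections and [c^n_0] takes at most n nonzero values, so
   for n < N the composition is [c^n_0]; and [c^n_0] itself is [Top]
   applied to a single projection, since a constant argument cannot satisfy
   x_{1,1} = 1 and x_{2,2} = 2. *)

Lemma leq_inj_codom (T : finType) (m n : nat) (u : 'I_m -> T) (y : 'I_n -> T) :
  injective u -> (forall i, u i \in codom y) -> m <= n.
Proof.
move=> u_inj u_y.
have sub_uy : codom u \subset codom y by apply/subsetP => _ /codomP[i ->].
rewrite -[m]card_ord -(card_codom u_inj).
apply: leq_trans (subset_leq_card sub_uy) _.
by rewrite -{2}(card_ord n) -(size_codom y) card_size.
Qed.

Section TopOperation.

Variable k : nat.

Lemma Top_diag (x : 'I_k.-1 * 'I_k.-1 -> carrier k) :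
  Top x != ord0 -> forall i, val (x (i, i)) = i.+1.
Proof.
rewrite /Top; case: ifP => [/orP[] /forallP x_diag _ i | _].
- exact/eqP/(x_diag (i, i)).
- exact/eqP/(x_diag (i, i)).
- by rewrite eqxx.
Qed.

Lemma Top_const (a : carrier k) : 1 < k.-1 -> Top (fun _ => a) = ord0.
Proof.
move=> N_gt1; apply/eqP; apply: contraT => /Top_diag a_diag.
by move: (a_diag (Ordinal (ltnW N_gt1))) (a_diag (Ordinal N_gt1)) => /= ->.
Qed.

Lemma Top_eq0_few_values (n : nat) (y : 'I_n -> carrier k)
    (x : 'I_k.-1 * 'I_k.-1 -> carrier k) :
  n < k.-1 -> (forall ij, x ij != ord0 -> x ij \in codom y) -> Top x = ord0.
Proof.
move=> n_lt_N x_y; apply/eqP; apply: contraLR n_lt_N => /Top_diag x_diag.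
rewrite -leqNgt; apply: (leq_inj_codom (u := fun i => x (i, i)) (y := y)).
- by move=> i j /(congr1 val); rewrite !x_diag => -[/val_inj].
- by move=> i; apply: x_y; rewrite -val_eqE /= x_diag.
Qed.

Lemma in_clone_Top_proj_or_const0 (n : nat) (f : ('I_n -> carrier k) -> carrier k) :
  n < k.-1 -> in_clone (@Top k) f -> is_projection f \/ f = @const0 k n.
Proof.
move=> n_lt_N; elim=> [i | g _ g_proj_or_0]; first by left; exists i.
right; apply: functional_extensionality => x.
apply: (Top_eq0_few_values (y := x)) => // ij.
by case: (g_proj_or_0 ij) => [[p ->] | ->] //=; rewrite codom_f.
Qed.

Lemma const0_in_clone (n : nat) :
  1 < k.-1 -> 0 < n -> in_clone (@Top k) (@const0 k n).
Proof.
move=> N_gt1 n_gt0.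
have -> : @const0 k n = fun x => Top (fun _ => x (Ordinal n_gt0)).
  by apply: functional_extensionality => x; rewrite Top_const.
by apply: clone_comp => _; apply: clone_proj.
Qed.

End TopOperation.

Theorem lemma3p1 (k n : nat) (hk : 3 <= k) (hn1 : 1 <= n) (hn2 : n < k - 1) :
  forall f : ('I_n -> carrier k) -> carrier k,
    in_clone (@Top k) f <-> (is_projection f \/ f = @const0 k n).
Proof.
have n_lt_N : n < k.-1 by rewrite -subn1.
have N_gt1 : 1 < k.-1 by lia.
move=> f; split; first exact: in_clone_Top_proj_or_const0.
case=> [[i ->] | ->]; first exact: clone_proj.
exact: const0_in_clone.
Qed.
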